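(* Let $g\in\mathcal{PSD}$ with $\{T^k(x):x\in X^{\rm in},k\in\mathbb N\}\subseteq\operatorname{dom}(g)$. Then $g$ is $(X^{\rm in},T,\varphi)$-compatible if and only if there exists an $(X^{\rm in},T,\varphi)$-certificate of compatibility for $g$.
   Context: Standing data: nonempty $X^{\rm in}\subseteq\mathbb R^d$, $T:\mathbb R^d\to\mathbb R^d$, $\varphi:\mathbb R^d\to\mathbb R$ with $\varphi(0)=0$, $\nu_k=\sup_{x\in X^{\rm in}}\varphi(T^k(x))$ assumed finite for all $k$; $G^{>}_\nu=\{k:\nu_k>\limsup_n\nu_n\}$. $\mathcal{PSD}$: functions $P:\mathbb R^d\to[0,+\infty]$ taking some value in $(0,+\infty)$; $\operatorname{dom}(g)=\{x:g(x)<+\infty\}$. $I^\varphi=\overline{\operatorname{conv}}\{\varphi(T^k(x)):k\in\mathbb N,x\in X^{\rm in}\}$ (closed convex hull in $\mathbb R$). $\mathrm{SC}$ is the set of $\alpha:\mathbb R\to\mathbb R$ for which there is an interval $I$ with $\alpha(I)=[0,1]$ and $\alpha$ strictly increasing and continuous on $\operatorname{conv}(I^\varphi\cup I)$. An $(X^{\rm in},T,\varphi)$-certificate of compatibility for $g$ is $\alpha\in\mathrm{SC}$ such that $\alpha(\nu_k)>0$ for some $k\in G^{>}_\nu$ and $\alpha(\varphi(T^k(x)))\le g(T^k(x))$ for all $k\in\mathbb N$, $x\in X^{\rm in}$. $g$ is $(X^{\rm in},T,\varphi)$-compatible at $k\in G^{>}_\nu$ if there exist $\varepsilon>0,\eta>0$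 such that for all $x\in X^{\rm in}$, $j\in\mathbb N$ with $\varphi(T^j(x))>\nu_k-\eta$ one has $g(T^j(x))>\varepsilon$; $g$ is $(X^{\rm in},T,\varphi)$-compatible if it is so at some $k\in G^{>}_\nu$. *)

From HB Require Import structures.
From mathcomp Require Import all_boot all_order all_algebra.
From mathcomp Require Import all_classical all_reals all_analysis.
Set Implicit Arguments. Unset Strict Implicit. Unset Printing Implicit Defensive.
Import Order.TTheory GRing.Theory Num.Theory.
Import numFieldNormedType.Exports.
Local Open Scope classical_set_scope.
Local Open Scope ring_scope.

Section Defs.
Variables (R : realType) (d : nat).
Variables (Xin : set 'rV[R]_d) (T : 'rV[R]_d -> 'rV[R]_d) (phi : 'rV[R]_d -> R).

Definition nu (k : nat) : R := sup [set phi (iter k T x) | x in Xin].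

Definition nu_finite : Prop := forall k, has_ubound [set phi (iter k T x) | x in Xin].

Definition Ggt : set nat :=
  [set k | (limn_esup (fun n => (nu n)%:E) < (nu k)%:E)%E].

Definition PSD (g : 'rV[R]_d -> \bar R) : Prop :=
  (forall x, (0 <= g x)%E) /\ exists x, (0 < g x)%E /\ (g x < +oo)%E.

Definition orbit_vals : set R := [set phi (iter k T x) | k in setT & x in Xin].

Definition convR (A : set R) : set R :=
  \bigcap_(C in [set C : set R | A `<=` C /\ is_interval C]) C.

Definition cl_convR (A : set R) : set R :=
  \bigcap_(C in [set C : set R | A `<=` C /\ is_interval C /\ closed C]) C.

Definition Iphi : set R := cl_convR orbit_vals.

Definition SC (alpha : R -> R) : Prop :=
  exists I : set R, is_interval I /\ alpha @` I = `[0, 1]%classic /\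
    let S := convR (Iphi `|` I) in
    (forall x y, S x -> S y -> x < y -> alpha x < alpha y) /\
    {within S, continuous alpha}.

Definition certificate (g : 'rV[R]_d -> \bar R) (alpha : R -> R) : Prop :=
  SC alpha /\ (exists2 k, Ggt k & 0 < alpha (nu k)) /\
  forall k x, Xin x -> ((alpha (phi (iter k T x)))%:E <= g (iter k T x))%E.

Definition compatible_at (g : 'rV[R]_d -> \bar R) (k : nat) : Prop :=
  Ggt k /\ exists eps eta : R, 0 < eps /\ 0 < eta /\
    forall x j, Xin x -> nu k - eta < phi (iter j T x) ->
      (eps%:E < g (iter j T x))%E.

Definition compatible (g : 'rV[R]_d -> \bar R) : Prop :=
  exists k, compatible_at g k.
End Defs.

(* Since nu_k exceeds the limsup of nu, the sequence nu is bounded above by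
   some M, and the affine map alpha sending nu_k - eta to 0 and M to eps is a
   certificate: alpha o phi is <= 0 <= g below the window and <= eps < g in it.
   Conversely, a certificate alpha is continuous at nu_k with alpha(nu_k) > 0,
   so it exceeds alpha(nu_k)/2 near nu_k, hence (being increasing) on the
   whole window above nu_k - eta, and alpha o phi <= g transfers this to g. *)

From HB Require Import structures.
From mathcomp Require Import all_boot all_order all_algebra.
From mathcomp Require Import all_classical all_reals all_analysis.
From mathcomp Require Import lra.
Set Implicit Arguments. Unset Strict Implicit. Unset Printing Implicit Defensive.
Import Order.TTheory GRing.Theory Num.Theory.
Import numFieldNormedType.Exports.
Local Open Scope classical_set_scope.
Local Open Scope ring_scope.

Section RealFacts.
Variable R : realType.

Lemma eventually_ubound_ubound (u : R ^nat) (N : nat) (b : R) :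
  (forall n, (N <= n)%N -> u n <= b) -> exists M, forall n, u n <= M.
Proof.
move=> tail_b; exists (\big[Order.max/b]_(i < N) u i) => n.
have [nN|Nn] := ltnP n N; first exact: (le_bigmax _ _ (Ordinal nN)).
exact: le_trans (tail_b _ Nn) (bigmax_ge_id _ _ _ _).
Qed.

Lemma limn_esup_lt_ubound (u : R ^nat) (x : R) :
  (limn_esup (EFin \o u) < x%:E)%E -> exists M, forall n, u n <= M.
Proof.
rewrite limn_esup_lim (cvg_lim _ (@cvg_esups_inf _ _)) //.
case/ereal_inf_lt=> _ [N _ <-] supN_lt.
apply: (eventually_ubound_ubound (N := N) (b := x)).
move=> n Nn; rewrite -lee_fin; apply: le_trans (ltW supN_lt).
by apply: ereal_sup_ubound; exists n.
Qed.

Lemma continuous_within_gt (S : set R) (f : R -> R) (s r : R) :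
  {within S, continuous f} -> S s -> r < f s ->
  exists2 e, 0 < e & forall y, S y -> `|s - y| < e -> r < f y.
Proof.
move=> f_cont Ss r_lt.
have := @cvgr_gt _ _ _ (within_filter _ _) _ _
  (proj1 (subspace_continuousP _ _) f_cont _ Ss) _ r_lt.
move=> /(_ (nbhs_filter _)); rewrite /within /= => /nbhs_ballP [e /= e0 fe].
by exists e => // y Sy sy; exact: fe.
Qed.

Lemma incr_continuous_within_gt (S : set R) (f : R -> R) (s r : R) :
  (forall x y, S x -> S y -> x < y -> f x < f y) ->
  {within S, continuous f} -> S s -> r < f s ->
  exists2 e, 0 < e & forall y, S y -> s - e < y -> r < f y.
Proof.
move=> f_incr f_cont Ss r_lt.
have [e e0 near_s] := continuous_within_gt f_cont Ss r_lt.
exists e => // y Sy sy; have [s_le_y|y_lt_s] := leP s y.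
  apply: lt_le_trans r_lt _; move: s_le_y; rewrite le_eqVlt.
  by case/predU1P=> [<- //|s_lt_y]; exact/ltW/f_incr.
by apply: near_s => //; rewrite ger0_norm ?subr_ge0 ?ltW // ltrBlDr -ltrBlDl.
Qed.

Lemma affine_image_itv (a c : R) : 0 < c ->
  (fun y => (y - a) / c) @` `[a, a + c]%classic = `[0, 1]%classic.
Proof.
move=> c0; apply/seteqP; split.
  move=> _ [y /= /andP[ay yac] <-]; rewrite /= in_itv /= !bnd_simp in ay yac *.
  rewrite divr_ge0 ?subr_ge0 ?(ltW c0) //=.
  by rewrite ler_pdivrMr // mul1r lerBlDl.
move=> z /= /andP[z0 z1]; rewrite !bnd_simp in z0 z1.
exists (a + z * c); last by rewrite /= addrAC subrr add0r mulfK ?gt_eqF.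
by rewrite /= in_itv /= lerDl lerD2l mulr_ge0 ?(ltW c0) //= ler_piMl ?(ltW c0).
Qed.

Lemma affine_incr (a c : R) : 0 < c -> {homo (fun y => (y - a) / c) : x y / x < y}.
Proof. by move=> c0 x y xy; rewrite ltr_pM2r ?invr_gt0 // ltrD2r. Qed.

Lemma affine_continuous_within (S : set R) (a c : R) :
  {within S, continuous (fun y => (y - a) / c)}.
Proof.
apply: continuous_subspaceT => x.
exact: cvgM (cvgB cvg_id (cvg_cst a)) (cvg_cst c^-1).
Qed.

End RealFacts.

Section Certificates.
Variables (R : realType) (d : nat).
Variables (Xin : set 'rV[R]_d) (T : 'rV[R]_d -> 'rV[R]_d) (phi : 'rV[R]_d -> R).
Hypothesis Xin_nonempty : Xin !=set0.
Hypothesis nu_fin : nu_finite Xin T phi.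

Local Notation nu := (nu Xin T phi).
Local Notation Iphi := (Iphi Xin T phi).

Lemma phi_le_nu k x : Xin x -> phi (iter k T x) <= nu k.
Proof. by move=> Xx; apply: ub_le_sup; [exact: nu_fin | exists x]. Qed.

Lemma Iphi_sub_convU I : Iphi `<=` convR (Iphi `|` I).
Proof. by move=> y Iy C [HC _]; apply: HC; left. Qed.

Lemma orbit_vals_sub_Iphi : orbit_vals Xin T phi `<=` Iphi.
Proof. by move=> y Oy C [HC _]; exact: HC. Qed.

Lemma nu_in_Iphi k : Iphi (nu k).
Proof.
move=> C [HC [_ cC]]; move/closure_id: cC => ->.
apply: (closureS _ (closure_sup _ _)); last exact: nu_fin.
- by move=> _ [x Xx <-]; apply: HC; exists k => //; exists x.
- by case: Xin_nonempty => x Xx; exists (phi (iter k T x)); exists x.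
Qed.

Lemma certificate_compatible g alpha :
  certificate Xin T phi g alpha -> compatible Xin T phi g.
Proof.
case=> [[I [_ [_ [alpha_incr alpha_cont]]]] [[k Gk alpha_pos] alpha_le_g]].
set S := convR (Iphi `|` I) in alpha_incr alpha_cont.
have orbit_S j x : Xin x -> S (phi (iter j T x)).
  move=> Xx; apply: Iphi_sub_convU; apply: orbit_vals_sub_Iphi.
  by exists j => //; exists x.
have half_lt : alpha (nu k) / 2 < alpha (nu k).
  by rewrite ltr_pdivrMr // ltr_pMr // ltr1n.
have [eta eta0 alpha_gt] := incr_continuous_within_gt alpha_incr alpha_cont
  (Iphi_sub_convU (nu_in_Iphi k)) half_lt.
exists k; split => //; exists (alpha (nu k) / 2), eta.
split; first by rewrite divr_gt0.
split => // x j Xx window; apply: lt_le_trans (alpha_le_g j x Xx).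
by rewrite lte_fin; apply: alpha_gt => //; exact: orbit_S.
Qed.

Lemma compatible_certificate g : (forall x, (0 <= g x)%E) ->
  compatible Xin T phi g -> exists alpha, certificate Xin T phi g alpha.
Proof.
move=> g_ge0 [k [Gk [eps [eta [eps0 [eta0 g_gt]]]]]].
have [M nu_le_M] := limn_esup_lt_ubound Gk.
set a := nu k - eta.
have a_lt_M : a < M by rewrite /a; have := nu_le_M k; lra.
set c := (M - a) / eps.
have c0 : 0 < c by rewrite /c divr_gt0 // subr_gt0.
exists (fun y => (y - a) / c); split; [|split].
- exists `[a, a + c]%classic; split; first exact: interval_is_interval.
  split; first exact: affine_image_itv.
  split; last exact: affine_continuous_within.
  by move=> y z _ _; exact: affine_incr.
- by exists k => //; rewrite divr_gt0 // /a; lra.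
- move=> j x Xx; set y := phi (iter j T x).
  have y_le_M : y <= M := le_trans (phi_le_nu j Xx) (nu_le_M j).
  have [ay|ya] := ltP a y.
    apply: le_trans (ltW (g_gt x j Xx ay)); rewrite lee_fin.
    by rewrite ler_pdivrMr // /c mulrC divfK ?gt_eqF // lerD2r.
  apply: le_trans (g_ge0 _); rewrite lee_fin.
  by rewrite ler_pdivrMr // mul0r subr_le0.
Qed.

End Certificates.

Theorem mainTheorem17 (R : realType) (d : nat)
  (Xin : set 'rV[R]_d) (T : 'rV[R]_d -> 'rV[R]_d) (phi : 'rV[R]_d -> R)
  (g : 'rV[R]_d -> \bar R) :
  Xin !=set0 -> phi 0 = 0 -> nu_finite Xin T phi ->
  PSD g ->
  (forall k x, Xin x -> (g (iter k T x) < +oo)%E) ->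
  compatible Xin T phi g <-> exists alpha, certificate Xin T phi g alpha.
Proof.
move=> Xin_nonempty _ nu_fin [g_ge0 _] _; split.
  exact: (compatible_certificate nu_fin g_ge0).
by case=> alpha; exact: (certificate_compatible Xin_nonempty nu_fin).
Qed.
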